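(* Let $\alpha,\beta,\gamma\in\mathbb{Z}_2^n$ with $\alpha\ne0$, let $\omega=\omega(\alpha,\beta,\gamma)$ and $\omega'=\omega(-\alpha,\beta,\gamma)$. Then for all $i\in\{0,\dots,7\}$, $$e_iA_{\omega_0}\cdots A_{\omega_{n-1}}e_0^T=e_{i\oplus4}A_{\omega'_0}\cdots A_{\omega'_{n-1}}e_0^T.$$
   Context: For $x\in\mathbb{Z}_2^n$, $x=(x_0,\dots,x_{n-1})$ is identified with the integer $\sum_i x_i2^{n-1-i}$ and $-x$ is computed modulo $2^n$. For $\alpha,\beta,\gamma\in\mathbb{Z}_2^n$, $\omega(\alpha,\beta,\gamma)_i=4\alpha_i+2\beta_i+\gamma_i$. Indices $0,\dots,7$ are identified with $\mathbb{Z}_2^3$ via $(p_0,p_1,p_2)\leftrightarrow4p_0+2p_1+p_2$ (so $\oplus$ is bitwise XOR of 3-bit vectors); $e_0,\dots,e_7$ are the standard basis row vectors of $\mathbb{Q}^8$. $A_0$ is $\frac14$ times the $8\times8$ matrix with rows $(4,0,0,1,0,1,1,0)$, $(0,0,0,1,0,1,0,0)$, $(0,0,0,1,0,0,1,0)$, $(0,0,0,1,0,0,0,0)$, $(0,0,0,0,0,1,1,0)$, $(0,0,0,0,0,1,0,0)$, $(0,0,0,0,0,0,1,0)$, $(0,\dots,0)$, and $(A_k)_{i,j}=(A_0)_{i\oplus k,j\oplus k}$. *)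

From mathcomp Require Import all_boot all_order all_algebra.
Set Implicit Arguments. Unset Strict Implicit. Unset Printing Implicit Defensive.
Import GRing.Theory Num.Theory.
Local Open Scope ring_scope.

Definition bvec (n : nat) := {ffun 'I_n -> bool}.

(* integer value sum_i x_i 2^(n-1-i)  (x_0 is the most significant bit) *)
Definition bval n (x : bvec n) : nat := (\sum_(i < n) x i * 2 ^ (n.-1 - i))%N.

Definition of_nat n (m : nat) : bvec n :=
  [ffun i : 'I_n => odd ((m %% 2 ^ n) %/ 2 ^ (n.-1 - i))].

Definition bneg n (x : bvec n) : bvec n := of_nat n (2 ^ n - bval x).

Definition omega n (a b c : bvec n) (i : 'I_n) : 'I_8 :=
  inord (4 * a i + 2 * b i + c i).

(* XOR of indices identified with Z_2^3 via (p0,p1,p2) <-> 4p0+2p1+p2 *)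
Definition bit2 (k : 'I_8) : bool := odd (k %/ 4).
Definition bit1 (k : 'I_8) : bool := odd (k %/ 2).
Definition bit0 (k : 'I_8) : bool := odd k.
Definition xor8 (i k : 'I_8) : 'I_8 :=
  inord (4 * (bit2 i (+) bit2 k) + 2 * (bit1 i (+) bit1 k) + (bit0 i (+) bit0 k)).

Definition A0_table : seq (seq nat) :=
  [:: [:: 4; 0; 0; 1; 0; 1; 1; 0];
      [:: 0; 0; 0; 1; 0; 1; 0; 0];
      [:: 0; 0; 0; 1; 0; 0; 1; 0];
      [:: 0; 0; 0; 1; 0; 0; 0; 0];
      [:: 0; 0; 0; 0; 0; 1; 1; 0];
      [:: 0; 0; 0; 0; 0; 1; 0; 0];
      [:: 0; 0; 0; 0; 0; 0; 1; 0];
      [:: 0; 0; 0; 0; 0; 0; 0; 0]].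

Definition A0 : 'M[rat]_8 :=
  \matrix_(i < 8, j < 8) ((nth 0%N (nth [::] A0_table i) j)%:R / 4).

Definition Amat (k : 'I_8) : 'M[rat]_8 :=
  \matrix_(i < 8, j < 8) A0 (xor8 i k) (xor8 j k).

Definition e (i : 'I_8) : 'rV[rat]_8 := delta_mx 0 i.

Definition Aprod n (w : 'I_n -> 'I_8) : 'M[rat]_8 := \prod_(i < n) Amat (w i).

From mathcomp Require Import all_boot all_order all_algebra fingroup perm zify.
Set Implicit Arguments. Unset Strict Implicit. Unset Printing Implicit Defensive.
Import GRing.Theory.

(* In two's complement, -alpha agrees with alpha from its last one bit j on and
   is its complement before j, so omega' = omega (+) 4 on the positions before j
   and omega' = omega from j on.  Conjugating by the permutation matrix D of
   r |-> r (+) 4 turns A_k into A_(k (+) 4), and e_(i (+) 4) D = e_i, so the two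
   prefixes contribute alike.  It remains that D fixes A_(omega_j) L e_0^T, with
   L the product of the later factors: these have top bit 0, so they are block
   triangular for the top bit and L e_0^T vanishes on indices with top bit 1,
   while A_(omega_j), whose top bit is 1, has equal rows r and r (+) 4 on the
   columns with top bit 0. *)

Definition ord_of_bits (a b c : bool) : 'I_8 := inord (4 * a + 2 * b + c).

Lemma val_ord_of_bits a b c : nat_of_ord (ord_of_bits a b c) = 4 * a + 2 * b + c.
Proof. by rewrite inordK //; case: a; case: b; case: c. Qed.

Lemma bit2_ord_of_bits a b c : bit2 (ord_of_bits a b c) = a.
Proof. by rewrite /bit2 val_ord_of_bits; case: a; case: b; case: c. Qed.

Lemma bit1_ord_of_bits a b c : bit1 (ord_of_bits a b c) = b.
Proof. by rewrite /bit1 val_ord_of_bits; case: a; case: b; case: c. Qed.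

Lemma bit0_ord_of_bits a b c : bit0 (ord_of_bits a b c) = c.
Proof. by rewrite /bit0 val_ord_of_bits; case: a; case: b; case: c. Qed.

Definition bits_ord_of_bits := (bit2_ord_of_bits, bit1_ord_of_bits, bit0_ord_of_bits).

Lemma ord_of_bits_bits r : ord_of_bits (bit2 r) (bit1 r) (bit0 r) = r.
Proof.
by apply: ord_inj; rewrite val_ord_of_bits; case: r => -[|[|[|[|[|[|[|[|//]]]]]]]].
Qed.

Lemma inord4_bits : inord 4 = ord_of_bits true false false.
Proof. exact: ord_inj. Qed.

Lemma xor8E r k :
  xor8 r k = ord_of_bits (bit2 r (+) bit2 k) (bit1 r (+) bit1 k) (bit0 r (+) bit0 k).
Proof. by []. Qed.

Lemma bit2_xor8 r k : bit2 (xor8 r k) = bit2 r (+) bit2 k.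
Proof. exact: bit2_ord_of_bits. Qed.

Lemma xor8A : associative xor8.
Proof. by move=> r k l; rewrite !xor8E !bits_ord_of_bits !addbA. Qed.

Lemma xor8C : commutative xor8.
Proof. by move=> r k; rewrite !xor8E addbC [bit1 _ (+) _]addbC [bit0 _ (+) _]addbC. Qed.

Lemma xor8AC : right_commutative xor8.
Proof. by move=> r k l; rewrite -!xor8A [xor8 k l]xor8C. Qed.

Lemma xor8K k : involutive (xor8^~ k).
Proof.
by move=> r; rewrite !xor8E !bits_ord_of_bits -!addbA !addbb !addbF ord_of_bits_bits.
Qed.

Lemma bit2_omega n (a b c : bvec n) i : bit2 (omega a b c i) = a i.
Proof. exact: bit2_ord_of_bits. Qed.

Lemma omega_negb n (a a' b c : bvec n) i : a' i = ~~ a i ->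
  omega a' b c i = xor8 (omega a b c i) (inord 4).
Proof.
by move=> a'i; rewrite xor8E inord4_bits !bits_ord_of_bits addbT !addbF -a'i.
Qed.

Definition bitsum n (f : nat -> bool) := \sum_(p < n) f p * 2 ^ p.

Lemma bitsum_recl n f : bitsum n.+1 f = f 0 + 2 * bitsum n (fun p => f p.+1).
Proof.
rewrite /bitsum big_ord_recl muln1 big_distrr /=; congr (_ + _).
by apply: eq_bigr => p _; rewrite expnS mulnCA.
Qed.

Lemma bitsum_lt n f : bitsum n f < 2 ^ n.
Proof.
elim: n f => [|n IHn] f; first by rewrite /bitsum big_ord0.
by rewrite bitsum_recl expnS; have := IHn (fun p => f p.+1); case: (f 0); lia.
Qed.

Lemma odd_bitsum n f q : q < n -> odd (bitsum n f %/ 2 ^ q) = f q.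
Proof.
elim: n f q => [//|n IHn] f [_|q]; rewrite bitsum_recl.
  by rewrite divn1 oddD oddM /= addbF oddb.
rewrite ltnS => lt_qn; rewrite expnS divnMA addnC mulnC divnMDl //.
have -> : f 0 %/ 2 = 0 by case: (f 0).
by rewrite addn0 IHn.
Qed.

Lemma sum_exp2_gt n t : t < n -> \sum_(p < n) (t < p) * 2 ^ p + 2 ^ t.+1 = 2 ^ n.
Proof.
elim: n => [//|n IHn]; rewrite ltnS leq_eqVlt => /predU1P [<-|lt_tn].
  by rewrite big1 // => p _; rewrite ltnNge -ltnS ltn_ord.
by rewrite big_ord_recr /= -addnAC IHn // lt_tn expnS; lia.
Qed.

Lemma bitsum_negate n t (f : nat -> bool) : t < n -> f t ->
  (forall p, p < t -> ~~ f p) ->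
  bitsum n (fun p => (t < p) (+) f p) + bitsum n f = 2 ^ n.
Proof.
move=> lt_tn ft f_low; rewrite -(sum_exp2_gt lt_tn) /bitsum -big_split /=.
pose t' := Ordinal lt_tn.
rewrite (eq_bigr (fun p : 'I_n => (t < p) * 2 ^ p + (p == t') * 2 ^ t.+1)); last first.
  move=> p _; rewrite -val_eqE /=; case: ltngtP => [lt_tp | lt_pt | <-].
  - by case: (f p) => /=; lia.
  - by rewrite (negbTE (f_low _ lt_pt)).
  - by rewrite ft expnS; lia.
rewrite big_split /=; congr (_ + _).
by rewrite (bigD1 t') //= eqxx mul1n big1 ?addn0 // => p /negbTE ->.
Qed.

Lemma bval_bitsum n (x : bvec n.+1) :
  bval x = bitsum n.+1 (fun p => x (inord (n - p))).
Proof.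
rewrite /bitsum (reindex_inj rev_ord_inj) /=; apply: eq_bigr => i _.
by rewrite subSS subKn ?inord_val // -ltnS.
Qed.

Lemma bvalK n : cancel (@bval n) (of_nat n).
Proof.
case: n => [|n] x; apply/ffunP => i; first by case: i.
rewrite ffunE modn_small bval_bitsum ?bitsum_lt // odd_bitsum; last first.
  by rewrite ltnS leq_subr.
by rewrite subKn ?inord_val // -ltnS.
Qed.

Lemma bnegE n (x : bvec n) (j : 'I_n) : x j -> (forall i : 'I_n, j < i -> ~~ x i) ->
  bneg x = [ffun i : 'I_n => (i < j) (+) x i].
Proof.
case: n x j => [|n] x j; first by case: j.
move=> xj x_high; set y := [ffun _ => _].
suff sum_yx : bval y + bval x = 2 ^ n.+1 by rewrite /bneg -sum_yx addnK bvalK.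
have lt_tn : n - j < n.+1 by rewrite ltnS leq_subr.
rewrite -(bitsum_negate (f := fun p => x (inord (n - p))) lt_tn); first last.
- by move=> p lt_p; apply: x_high; rewrite inordK; lia.
- by rewrite subKn ?inord_val // -ltnS.
rewrite !bval_bitsum; congr (_ + _); apply: eq_bigr => p _.
have p_le_n := ltn_ord p; have j_le_n := ltn_ord j.
rewrite ffunE inordK; last by lia.
by congr (_ * _); congr (nat_of_bool (_ (+) _)); apply/idP/idP; lia.
Qed.

Local Open Scope ring_scope.

Lemma A0_lower_left r l : bit2 r -> ~~ bit2 l -> A0 r l = 0.
Proof.
rewrite -[r]ord_of_bits_bits -[l]ord_of_bits_bits !bit2_ord_of_bits.
rewrite mxE !val_ord_of_bits => -> /negbTE ->.
by case: (bit1 r); case: (bit0 r); case: (bit1 l); case: (bit0 l); rewrite /= mul0r.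
Qed.

Lemma A0_row_periodic r l : bit2 l -> A0 (xor8 r (inord 4)) l = A0 r l.
Proof.
rewrite -[r]ord_of_bits_bits -[l]ord_of_bits_bits xor8E inord4_bits.
rewrite !bits_ord_of_bits !mxE !val_ord_of_bits => ->; rewrite !addbF.
by case: (bit2 r); case: (bit1 r); case: (bit0 r); case: (bit1 l); case: (bit0 l).
Qed.

Lemma AmatE k r l : Amat k r l = A0 (xor8 r k) (xor8 l k).
Proof. exact: mxE. Qed.

Lemma Amat_lower_left k r l : ~~ bit2 k -> bit2 r -> ~~ bit2 l -> Amat k r l = 0.
Proof.
by move=> /negbTE k0 r1 l0; rewrite AmatE A0_lower_left // bit2_xor8 k0 addbF.
Qed.

Lemma Amat_row_periodic k r l : bit2 k -> ~~ bit2 l ->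
  Amat k (xor8 r (inord 4)) l = Amat k r l.
Proof.
move=> k1 /negbTE l0.
by rewrite !AmatE (xor8AC r) A0_row_periodic // bit2_xor8 k1 l0.
Qed.

Lemma Amat_xor4 k r l :
  Amat (xor8 k (inord 4)) r l = Amat k (xor8 r (inord 4)) (xor8 l (inord 4)).
Proof. by rewrite !AmatE !xor8A (xor8AC r) (xor8AC l). Qed.

Section CoordStable.
Variables (R : pzSemiRingType) (n : nat) (S : pred 'I_n).

Definition coord_stable (M : 'M[R]_n) := forall r l, S r -> ~~ S l -> M r l = 0.

Lemma coord_stableM M N : coord_stable M -> coord_stable N -> coord_stable (M *m N).
Proof.
move=> sM sN r l Sr Sl; rewrite mxE big1 // => m _.
by case Sm: (S m); [rewrite sN ?Sm ?mulr0 | rewrite sM ?Sm ?mul0r].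
Qed.

Lemma coord_stable_prod I (s : seq I) (P : pred I) (F : I -> 'M[R]_n) :
  (forall i, P i -> coord_stable (F i)) -> coord_stable (\prod_(i <- s | P i) F i).
Proof.
move=> sF; apply: big_ind => [|M N|//]; last by rewrite -mulmxE; apply: coord_stableM.
by move=> r l Sr Sl; rewrite mxE; case: eqP => // eq_rl; rewrite -eq_rl Sr in Sl.
Qed.

End CoordStable.

Lemma prod_conj_involutive (R : pzSemiRingType) I (s : seq I) (P : pred I)
    (F : I -> R) d :
  d * d = 1 -> \prod_(i <- s | P i) (d * F i * d) = d * (\prod_(i <- s | P i) F i) * d.
Proof.
move=> dd; elim: s => [|i s IHs]; first by rewrite !big_nil mulr1.
rewrite !big_cons; case: (P i) => //; rewrite IHs.
by rewrite !mulrA -(mulrA _ d d) dd mulr1.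
Qed.

Definition xor4_perm : {perm 'I_8} := perm (can_inj (xor8K (inord 4))).

Lemma xor4_perm_sqr : (xor4_perm * xor4_perm = 1)%g.
Proof. by apply/permP => r; rewrite permM !permE xor8K. Qed.

Lemma xor4_permV : (xor4_perm^-1 = xor4_perm)%g.
Proof. by rewrite -[LHS]mul1g -xor4_perm_sqr -mulgA mulgV mulg1. Qed.

Definition xor4_mx : 'M[rat]_8 := perm_mx xor4_perm.

Lemma xor4_mx_sqr : xor4_mx * xor4_mx = 1.
Proof. by rewrite -mulmxE -perm_mxM xor4_perm_sqr perm_mx1. Qed.

Lemma mul_xor4_mx m (M : 'M[rat]_(8, m)) r l :
  (xor4_mx *m M) r l = M (xor8 r (inord 4)) l.
Proof. by rewrite /xor4_mx -row_permE mxE permE. Qed.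

Lemma mulmx_xor4 m (M : 'M[rat]_(m, 8)) r l :
  (M *m xor4_mx) r l = M r (xor8 l (inord 4)).
Proof. by rewrite /xor4_mx -xor4_permV -col_permE mxE permE. Qed.

Lemma Amat_conj k : Amat (xor8 k (inord 4)) = xor4_mx * Amat k * xor4_mx.
Proof. by apply/matrixP => r l; rewrite -!mulmxE mulmx_xor4 mul_xor4_mx Amat_xor4. Qed.

Lemma e_xor4_mx i : e (xor8 i (inord 4)) *m xor4_mx = e i.
Proof.
by apply/matrixP => a b; rewrite mulmx_xor4 !mxE (can_eq (xor8K (inord 4))).
Qed.

Lemma xor4_mx_fix k (v : 'cV[rat]_8) : bit2 k -> (forall r, bit2 r -> v r 0 = 0) ->
  xor4_mx *m (Amat k *m v) = Amat k *m v.
Proof.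
move=> k1 v_top; apply/matrixP => r c; rewrite mul_xor4_mx (ord1 c) !mxE.
apply: eq_bigr => l _; case: (boolP (bit2 l)) => [l1|l0].
  by rewrite v_top // !mulr0.
by rewrite Amat_row_periodic.
Qed.

Lemma prod_nat_split (R : pzSemiRingType) n j (F : nat -> R) : (j < n)%N ->
  \prod_(0 <= p < n) F p =
  (\prod_(0 <= p < j) F p) * (F j * \prod_(j.+1 <= p < n) F p).
Proof. by move=> lt_jn; rewrite (big_cat_nat (leq0n j) (ltnW lt_jn)) (big_ltn lt_jn). Qed.

Lemma Aprod_flip_prefix n j (w : nat -> 'I_8) i : (j < n)%N -> bit2 (w j) ->
  (forall p, (j < p < n)%N -> ~~ bit2 (w p)) ->
  e i *m \prod_(0 <= p < n) Amat (w p) *m (e 0)^T =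
  e (xor8 i (inord 4)) *m
    \prod_(0 <= p < n) Amat (if (p < j)%N then xor8 (w p) (inord 4) else w p)
    *m (e 0)^T.
Proof.
move=> lt_jn wj1 w_high; rewrite !(prod_nat_split _ lt_jn) ltnn.
have -> : \prod_(0 <= p < j) Amat (if (p < j)%N then xor8 (w p) (inord 4) else w p)
          = xor4_mx * \prod_(0 <= p < j) Amat (w p) * xor4_mx.
  rewrite -prod_conj_involutive ?xor4_mx_sqr //; apply: eq_big_nat => p /= lt_pj.
  by rewrite lt_pj Amat_conj.
have -> : \prod_(j.+1 <= p < n) Amat (if (p < j)%N then xor8 (w p) (inord 4) else w p)
          = \prod_(j.+1 <= p < n) Amat (w p).
  by apply: eq_big_nat => p /andP [lt_jp _]; rewrite ltnNge ltnW.
set L := \prod_(j.+1 <= p < n) _.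
have L_stable : coord_stable bit2 L.
  rewrite /L big_nat_cond; apply: coord_stable_prod => p /andP [/andP [lt_jp lt_pn] _].
  by move=> r l; apply: Amat_lower_left; rewrite w_high ?lt_jp.
have Le0_top r : bit2 r -> (L *m (e 0)^T) r 0 = 0.
  by move=> r1; rewrite trmx_delta -colE mxE L_stable.
by rewrite -!mulmxE !mulmxA e_xor4_mx -!mulmxA xor4_mx_fix.
Qed.

Lemma ffun_last_true n (x : {ffun 'I_n -> bool}) : x != [ffun=> false] ->
  exists2 j : 'I_n, x j & forall i : 'I_n, (j < i)%N -> ~~ x i.
Proof.
move=> x_nz; have [i0 xi0] : exists i, x i.
  apply/existsP; apply: contraR x_nz => /existsPn x_false.
  by apply/eqP/ffunP => i; rewrite ffunE; apply/negbTE/x_false.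
case: (arg_maxnP (fun i : 'I_n => nat_of_ord i) xi0) => j xj j_max.
by exists j => // i; apply: contraL => /j_max; rewrite -leqNgt.
Qed.

Lemma Aprod_nat n (w : 'I_n.+1 -> 'I_8) :
  Aprod w = \prod_(0 <= p < n.+1) Amat (w (inord p)).
Proof. by rewrite big_mkord; apply: eq_bigr => p _; rewrite inord_val. Qed.

Theorem lemma2 (n : nat) (alpha beta gamma : bvec n) :
  alpha != [ffun _ => false] ->
  forall i : 'I_8,
    e i *m Aprod (omega alpha beta gamma) *m (e 0)^T =
    e (xor8 i (inord 4)) *m Aprod (omega (bneg alpha) beta gamma) *m (e 0)^T.
Proof.
case: n alpha beta gamma => [|n] alpha beta gamma alpha_nz i.
  by case/eqP: alpha_nz; apply/ffunP => -[].
have [j alpha_j alpha_high] := ffun_last_true alpha_nz.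
rewrite (bnegE alpha_j alpha_high) !Aprod_nat.
rewrite (@Aprod_flip_prefix _ j (fun p => omega alpha beta gamma (inord p))) /=.
- congr (_ *m _ *m _); apply: eq_big_nat => p /= lt_pn.
  case: ifP => lt_pj; last by rewrite /omega ffunE inordK ?lt_pj.
  by rewrite [in RHS](@omega_negb _ alpha) // ffunE inordK ?lt_pj.
- exact: ltn_ord.
- by rewrite inord_val bit2_omega.
- by move=> p /andP [lt_jp lt_pn]; rewrite bit2_omega alpha_high // inordK.
Qed.
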